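(* Let $m>0$, let $k$ be a nonzero integer and $\lambda\le 0$. Let $\gamma$ be the maximal solution of the initial value problem $$\gamma'(r)+\gamma(r)^2=-\frac{1}{4r^2}+\frac{k^2}{r^2}-\frac{m}{r^3}\Big(1+\frac{m}{2r}\Big)^{-2}-\lambda\Big(1+\frac{m}{2r}\Big)^4,\qquad \gamma(m/2)=m^{-1}.$$ Then $\gamma$ is defined and finite on all of $[m/2,\infty)$; in particular, for no $R>m/2$ does one have $\lim_{r\to R^-}\gamma(r)=-\infty$. Equivalently, for every $R>m/2$ there is no nonzero solution $v$ of $v''+v\big(\frac{1}{4r^2}-\frac{k^2}{r^2}+\frac{m}{r^3}(1+\frac{m}{2r})^{-2}+\lambda(1+\frac{m}{2r})^4\big)=0$ on $[m/2,R]$ with $v'(m/2)=m^{-1}v(m/2)$ and $v(R)=0$. *)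

From Stdlib Require Import Reals ZArith.
Open Scope R_scope.

Definition Qpot (m : R) (k : Z) (lam : R) (r : R) : R :=
  - / (4 * r ^ 2) + (IZR k) ^ 2 / r ^ 2
  - m / r ^ 3 * (/ (1 + m / (2 * r))) ^ 2
  - lam * (1 + m / (2 * r)) ^ 4.

(* Idea: Q >= 0 on (0, oo), and the Riccati equation is linearised by
   gamma = w/v with v' = w, w' = Q v, v(m/2) = 1, w(m/2) = 1/m.  Since
   (v w)' = w^2 + Q v^2 >= 0, v w >= 1/m on [m/2, oo), so v never vanishes
   and gamma is defined on the whole half-line.  The same monotonicity of
   v v' makes v^2 nondecreasing for a solution of v'' = Q v with
   v'(m/2) = v(m/2)/m, so such a v vanishing at R vanishes on [m/2, R]. *)

From Stdlib Require Import Reals ZArith Lra Lia Psatz Ranalysis5.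
From Coquelicot Require Import Coquelicot.
Open Scope R_scope.

Lemma nondecreasing_of_deriv_nonneg (f f' : R -> R) (a b : R) : a <= b ->
  (forall c, a <= c <= b -> derivable_pt_lim f c (f' c)) ->
  (forall c, a <= c <= b -> 0 <= f' c) -> f a <= f b.
Proof.
  intros hab hd hpos. destruct (Req_dec a b) as [<-|hne]; [lra|].
  destruct (MVT_cor2 f f' a b) as [c [hmvt hc]]; [lra|exact hd|].
  assert (0 <= f' c * (b - a)) by (apply Rmult_le_pos; [apply hpos|]; lra).
  lra.
Qed.

Lemma abs_increment_le_of_deriv (F F' G G' : R -> R) (a b : R) : a <= b ->
  (forall c, a <= c <= b -> derivable_pt_lim F c (F' c)) ->
  (forall c, a <= c <= b -> derivable_pt_lim G c (G' c)) ->
  (forall c, a <= c <= b -> Rabs (F' c) <= G' c) ->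
  Rabs (F b - F a) <= G b - G a.
Proof.
  intros hab hF hG hbound.
  assert (hminus : G a - F a <= G b - F b).
  { apply (nondecreasing_of_deriv_nonneg (fun x => G x - F x) (fun x => G' x - F' x));
      [lra| intros; apply derivable_pt_lim_minus; auto |].
    intros c hc. pose proof (proj1 (Rabs_le_between _ _) (hbound c hc)). lra. }
  assert (hplus : G a + F a <= G b + F b).
  { apply (nondecreasing_of_deriv_nonneg (fun x => G x + F x) (fun x => G' x + F' x));
      [lra| intros; apply derivable_pt_lim_plus; auto |].
    intros c hc. pose proof (proj1 (Rabs_le_between _ _) (hbound c hc)). lra. }
  apply Rabs_le. lra.
Qed.

Lemma continuous_of_derivable (f : R -> R) (x l : R) :
  derivable_pt_lim f x l -> continuity_pt f x.
Proof. intros h. apply derivable_continuous_pt. exists l. exact h. Qed.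

Lemma derivable_antiderivative (f : R -> R) (a r0 x : R) :
  (forall y, continuity_pt f y) ->
  derivable_pt_lim (fun r => a + RInt f r0 r) x (f x).
Proof.
  intros hf. replace (f x) with (0 + f x) by ring.
  apply (derivable_pt_lim_plus (fun _ => a)); [apply derivable_pt_lim_const|].
  apply is_derive_Reals, (is_derive_RInt f (fun y => RInt f r0 y) r0 x).
  - apply filter_forall. intros y. apply (@RInt_correct R_CompleteNormedModule).
    apply (@ex_RInt_continuous R_CompleteNormedModule).
    intros z _. apply continuity_pt_filterlim; auto.
  - apply continuity_pt_filterlim; auto.
Qed.

(** * Sequences with geometrically decaying increments *)

Lemma geometric_small (D e : R) : 0 < e ->
  exists N, forall n, (N <= n)%nat -> Rabs (D * (/2) ^ n) < e.
Proof.
  intros he.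
  assert (hD : 0 <= Rabs D) by apply Rabs_pos.
  destruct (pow_lt_1_zero (/2) ltac:(rewrite Rabs_pos_eq; lra) (e / (Rabs D + 1)))
    as [N HN]; [apply Rdiv_lt_0_compat; lra|].
  exists N. intros n hn. specialize (HN n hn). rewrite Rabs_mult.
  apply (Rmult_lt_compat_r (Rabs D + 1)) in HN; [|lra].
  unfold Rdiv in HN. rewrite Rmult_assoc, Rinv_l in HN by lra.
  assert (0 <= Rabs ((/2) ^ n)) by apply Rabs_pos. nra.
Qed.

(* The limit of a sequence (0 if it has no finite limit). *)
Definition seq_lim (u : nat -> R) : R := real (Lim_seq u).

Section GeometricIncrements.
Variables (u : nat -> R) (D : R).
Hypothesis hstep : forall n, Rabs (u (S n) - u n) <= D * (/2) ^ n.

Lemma geometric_telescope p n :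
  Rabs (u (n + p)%nat - u n) <= 2 * D * (/2) ^ n - 2 * D * (/2) ^ (n + p).
Proof.
  induction p as [|p IH].
  - rewrite Nat.add_0_r, Rminus_diag, Rabs_R0. lra.
  - replace (n + S p)%nat with (S (n + p)) by lia.
    pose proof (hstep (n + p)%nat).
    pose proof (Rabs_triang (u (S (n + p)) - u (n + p)%nat) (u (n + p)%nat - u n)).
    replace (u (S (n + p)) - u (n + p)%nat + (u (n + p)%nat - u n))
      with (u (S (n + p)) - u n) in * by ring.
    simpl pow. lra.
Qed.

Lemma geometric_convergence :
  Un_cv u (seq_lim u) /\ forall n, Rabs (seq_lim u - u n) <= 2 * D * (/2) ^ n.
Proof.
  assert (hD : 0 <= D).
  { pose proof (hstep O). pose proof (Rabs_pos (u 1%nat - u 0%nat)). simpl in *. lra. }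
  assert (hpow : forall n, 0 <= 2 * D * (/2) ^ n).
  { intros n. apply Rmult_le_pos; [lra|apply pow_le; lra]. }
  assert (hcauchy : ex_finite_lim_seq u).
  { apply ex_lim_seq_cauchy_corr. intros eps.
    destruct (geometric_small (2 * D) eps (cond_pos eps)) as [N HN]. exists N.
    assert (hclose : forall i j, (N <= i)%nat -> (i <= j)%nat -> Rabs (u j - u i) < eps).
    { intros i j hi hij. replace j with (i + (j - i))%nat by lia.
      pose proof (geometric_telescope (j - i) i). pose proof (hpow (i + (j - i))%nat).
      specialize (HN i hi). rewrite Rabs_pos_eq in HN by apply hpow. lra. }
    intros n q hn hq. destruct (Nat.le_ge_cases n q).
    - rewrite Rabs_minus_sym. auto.
    - auto. }
  assert (hlim : Un_cv u (seq_lim u)).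
  { apply is_lim_seq_Reals. destruct hcauchy as [l hl].
    unfold seq_lim. rewrite (is_lim_seq_unique _ _ hl). exact hl. }
  split; [exact hlim|].
  intros n. apply le_epsilon. intros eps he.
  destruct (hlim eps he) as [N HN]. specialize (HN (n + N)%nat ltac:(lia)).
  unfold R_dist in HN. rewrite Rabs_minus_sym in HN.
  pose proof (geometric_telescope N n). pose proof (hpow (n + N)%nat).
  pose proof (Rabs_triang (seq_lim u - u (n + N)%nat) (u (n + N)%nat - u n)).
  replace (seq_lim u - u (n + N)%nat + (u (n + N)%nat - u n))
    with (seq_lim u - u n) in * by ring.
  lra.
Qed.

End GeometricIncrements.

Lemma CVU_of_geometric_bound (fn : nat -> R -> R) (f : R -> R) (x : R)
    (rad : posreal) (D : R) :
  (forall y n, Boule x rad y -> Rabs (f y - fn n y) <= D * (/2) ^ n) ->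
  CVU fn f x rad.
Proof.
  intros hb eps he. destruct (geometric_small D eps he) as [N HN]. exists N.
  intros n y hn hy. specialize (hb y n hy). specialize (HN n hn).
  pose proof (Rle_abs (D * (/2) ^ n)). lra.
Qed.

(** * The Bielecki weight *)

Definition weight (K r0 s : R) : R := exp (2 * K * (s - r0)) + exp (2 * K * (r0 - s)).

Lemma weight_ge_1 (K r0 s : R) : 1 <= weight K r0 s.
Proof.
  unfold weight. pose proof (exp_ineq1_le (2 * K * (s - r0))).
  pose proof (exp_ineq1_le (2 * K * (r0 - s))). lra.
Qed.

Lemma weight_le (K r0 A B s : R) : 0 <= K -> A <= r0 <= B -> A <= s <= B ->
  weight K r0 s <= 2 * exp (2 * K * (B - A)).
Proof.
  intros hK hr hs. unfold weight.
  assert (hexp : forall x y, x <= y -> exp x <= exp y).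
  { intros x y hxy. destruct (Req_dec x y) as [->|]; [lra|].
    apply Rlt_le, exp_increasing. lra. }
  assert (exp (2 * K * (s - r0)) <= exp (2 * K * (B - A))) by (apply hexp; nra).
  assert (exp (2 * K * (r0 - s)) <= exp (2 * K * (B - A))) by (apply hexp; nra).
  lra.
Qed.

(* The contraction step of the weighted norm: integrating a function bounded by
   K D weight from r0 produces one bounded by D/2 weight. *)
Lemma weighted_integration_bound (F H : R -> R) (K D r0 A B : R) :
  0 < K -> 0 <= D -> A <= r0 <= B ->
  (forall x, derivable_pt_lim F x (H x)) -> F r0 = 0 ->
  (forall s, A <= s <= B -> Rabs (H s) <= K * D * weight K r0 s) ->
  forall s, A <= s <= B -> Rabs (F s) <= D / 2 * weight K r0 s.
Proof.
  intros hK hD hr hF hF0 hH s hs.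
  set (G := fun x => D / 2 * (exp (2 * K * (x - r0)) - exp (2 * K * (r0 - x)))).
  assert (hG : forall x, derivable_pt_lim G x (K * D * weight K r0 x)).
  { intros x. apply is_derive_Reals. unfold G, weight. auto_derive; auto.
    unfold Rminus. field. }
  assert (hG0 : G r0 = 0) by (unfold G; rewrite Rminus_diag; ring).
  assert (hcmp : forall a b, A <= a -> a <= b -> b <= B ->
            Rabs (F b - F a) <= G b - G a).
  { intros a b ha hab hb.
    apply (abs_increment_le_of_deriv F H G (fun x => K * D * weight K r0 x));
      auto; intros c hc; apply hH; lra. }
  pose proof (exp_pos (2 * K * (s - r0))). pose proof (exp_pos (2 * K * (r0 - s))).
  destruct (Rle_dec r0 s).
  - specialize (hcmp r0 s ltac:(lra) ltac:(lra) ltac:(lra)).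
    rewrite hF0, hG0, !Rminus_0_r in hcmp. unfold G, weight in *. nra.
  - specialize (hcmp s r0 ltac:(lra) ltac:(lra) ltac:(lra)).
    rewrite hF0, hG0, Rabs_minus_sym, Rminus_0_r in hcmp. unfold G, weight in *. nra.
Qed.

(** * Picard iteration for the linear system v' = w, w' = Q v *)

Fixpoint picard (Q : R -> R) (r0 a b : R) (n : nat) : (R -> R) * (R -> R) :=
  match n with
  | O => (fun _ => a, fun _ => b)
  | S n => let p := picard Q r0 a b n in
      (fun r => a + RInt (snd p) r0 r, fun r => b + RInt (fun s => Q s * fst p s) r0 r)
  end.

Section Picard.
Variables (Q : R -> R) (r0 a b : R).
Hypothesis hQ : forall x, continuity_pt Q x.

Definition vn (n : nat) : R -> R := fst (picard Q r0 a b n).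
Definition wn (n : nat) : R -> R := snd (picard Q r0 a b n).

Lemma picard_continuous n :
  (forall x, continuity_pt (vn n) x) /\ (forall x, continuity_pt (wn n) x).
Proof.
  induction n as [|n [IHv IHw]].
  - split; intros x; apply continuity_pt_const; intros ? ?; reflexivity.
  - split; intros x; eapply continuous_of_derivable; apply derivable_antiderivative; auto.
    intros y. apply continuity_pt_mult; auto.
Qed.

Lemma vn_derivable n x : derivable_pt_lim (vn (S n)) x (wn n x).
Proof. apply derivable_antiderivative, picard_continuous. Qed.

Lemma wn_derivable n x : derivable_pt_lim (wn (S n)) x (Q x * vn n x).
Proof.
  apply (derivable_antiderivative (fun s => Q s * vn n s)).
  intros y. apply continuity_pt_mult; [apply hQ|apply picard_continuous].
Qed.

Lemma vn_r0 n : vn n r0 = a.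
Proof. destruct n; [reflexivity|]. unfold vn; simpl. rewrite RInt_point. apply Rplus_0_r. Qed.

Lemma wn_r0 n : wn n r0 = b.
Proof. destruct n; [reflexivity|]. unfold wn; simpl. rewrite RInt_point. apply Rplus_0_r. Qed.

Definition dv (n : nat) (s : R) : R := vn (S n) s - vn n s.
Definition dw (n : nat) (s : R) : R := wn (S n) s - wn n s.

Lemma picard_weighted_bound A B K C : 1 <= K -> A <= r0 <= B ->
  (forall s, A <= s <= B -> Rabs (Q s) <= K) ->
  (forall s, A <= s <= B -> Rabs (dv 0 s) <= C /\ Rabs (dw 0 s) <= C) ->
  forall n s, A <= s <= B ->
    Rabs (dv n s) <= C * (/2) ^ n * weight K r0 s /\
    Rabs (dw n s) <= C * (/2) ^ n * weight K r0 s.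
Proof.
  intros hK hr hQK h0.
  assert (hC : 0 <= C).
  { destruct (h0 r0 hr) as [h _]. pose proof (Rabs_pos (dv 0 r0)). lra. }
  induction n as [|n IH]; intros s hs.
  - pose proof (weight_ge_1 K r0 s). destruct (h0 s hs). simpl. split; nra.
  - assert (hD : 0 <= C * (/2) ^ n) by (apply Rmult_le_pos; [lra|apply pow_le; lra]).
    replace (C * (/2) ^ S n) with (C * (/2) ^ n / 2) by (simpl; field).
    split.
    + apply (weighted_integration_bound (dv (S n)) (dw n) K (C * (/2) ^ n) r0 A B);
        auto; try lra.
      * intros x. apply derivable_pt_lim_minus; apply vn_derivable.
      * unfold dv. rewrite !vn_r0. ring.
      * intros s' hs'. destruct (IH s' hs') as [_ h].
        pose proof (weight_ge_1 K r0 s').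
        assert (0 <= C * (/2) ^ n * weight K r0 s') by nra. nra.
    + apply (weighted_integration_bound (dw (S n)) (fun x => Q x * dv n x)
               K (C * (/2) ^ n) r0 A B); auto; try lra.
      * intros x. unfold dv. rewrite Rmult_minus_distr_l.
        apply derivable_pt_lim_minus; apply wn_derivable.
      * unfold dw. rewrite !wn_r0. ring.
      * intros s' hs'. destruct (IH s' hs') as [h _]. rewrite Rabs_mult.
        pose proof (hQK s' hs'). pose proof (Rabs_pos (Q s')).
        pose proof (Rabs_pos (dv n s')). pose proof (weight_ge_1 K r0 s'). nra.
Qed.

Lemma picard_geometric_bound A B : A <= r0 <= B ->
  exists D K, (forall s, A <= s <= B -> Rabs (Q s) <= K) /\
   forall n s, A <= s <= B -> Rabs (dv n s) <= D * (/2) ^ n /\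
                              Rabs (dw n s) <= D * (/2) ^ n.
Proof.
  intros hr.
  destruct (continuity_ab_maj (fun s => Rabs (Q s)) A B ltac:(lra)) as [MQ [hMQ _]].
  { intros c _. apply (continuity_pt_comp Q Rabs); [apply hQ|apply Rcontinuity_abs]. }
  destruct (continuity_ab_maj (fun s => Rabs (dv 0 s) + Rabs (dw 0 s)) A B ltac:(lra))
    as [M0 [hM0 _]].
  { intros c _. destruct (picard_continuous 0) as [hv0 hw0].
    destruct (picard_continuous 1) as [hv1 hw1].
    apply continuity_pt_plus; apply (continuity_pt_comp _ Rabs);
      try apply Rcontinuity_abs; apply continuity_pt_minus; auto. }
  set (K := Rmax 1 (Rabs (Q MQ))).
  set (C := Rabs (dv 0 M0) + Rabs (dw 0 M0)).
  assert (hK : 1 <= K) by apply Rmax_l.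
  assert (hQK : forall s, A <= s <= B -> Rabs (Q s) <= K).
  { intros s hs. apply (Rle_trans _ (Rabs (Q MQ))); [exact (hMQ s hs)|apply Rmax_r]. }
  assert (hC0 : forall s, A <= s <= B -> Rabs (dv 0 s) <= C /\ Rabs (dw 0 s) <= C).
  { intros s hs. pose proof (hM0 s hs) as hs0. cbv beta in hs0. fold C in hs0.
    pose proof (Rabs_pos (dv 0 s)). pose proof (Rabs_pos (dw 0 s)). lra. }
  assert (hC : 0 <= C).
  { destruct (hC0 r0 hr) as [h _]. pose proof (Rabs_pos (dv 0 r0)). lra. }
  exists (C * (2 * exp (2 * K * (B - A)))), K. split; [exact hQK|].
  intros n s hs.
  destruct (picard_weighted_bound A B K C hK hr hQK hC0 n s hs) as [hv hw].
  pose proof (weight_le K r0 A B s ltac:(lra) hr hs).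
  assert (0 <= C * (/2) ^ n) by (apply Rmult_le_pos; [lra|apply pow_le; lra]).
  assert (C * (/2) ^ n * weight K r0 s <= C * (2 * exp (2 * K * (B - A))) * (/2) ^ n) by nra.
  lra.
Qed.

Definition v_lim (y : R) : R := seq_lim (fun n => vn n y).
Definition w_lim (y : R) : R := seq_lim (fun n => wn n y).

Lemma picard_locally_uniform x :
  exists (D K : R), (forall y, Boule x posreal_one y -> Rabs (Q y) <= K) /\
    forall y, Boule x posreal_one y ->
      (Un_cv (fun n => vn n y) (v_lim y) /\
       forall n, Rabs (v_lim y - vn n y) <= 2 * D * (/2) ^ n) /\
      (Un_cv (fun n => wn n y) (w_lim y) /\
       forall n, Rabs (w_lim y - wn n y) <= 2 * D * (/2) ^ n).
Proof.
  set (A := Rmin x r0 - 1). set (B := Rmax x r0 + 1).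
  assert (hr : A <= r0 <= B).
  { unfold A, B. pose proof (Rmin_r x r0). pose proof (Rmax_r x r0). lra. }
  assert (hball : forall y, Boule x posreal_one y -> A <= y <= B).
  { intros y hy. unfold Boule in hy. simpl in hy. apply Rlt_le, Rabs_le_between in hy.
    unfold A, B. pose proof (Rmin_l x r0). pose proof (Rmax_l x r0). lra. }
  destruct (picard_geometric_bound A B hr) as [D [K [hQK hb]]].
  exists D, K. split; [intros y hy; apply hQK, hball, hy|].
  intros y hy. split; apply geometric_convergence; intros n; apply (hb n y (hball y hy)).
Qed.

Lemma linear_system_solution :
  v_lim r0 = a /\ w_lim r0 = b /\
  forall x, derivable_pt_lim v_lim x (w_lim x) /\
            derivable_pt_lim w_lim x (Q x * v_lim x).
Proof.
  split; [|split].
  - unfold v_lim, seq_lim. rewrite (Lim_seq_ext _ (fun _ => a)) by apply vn_r0.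
    rewrite Lim_seq_const. reflexivity.
  - unfold w_lim, seq_lim. rewrite (Lim_seq_ext _ (fun _ => b)) by apply wn_r0.
    rewrite Lim_seq_const. reflexivity.
  - intros x.
    destruct (picard_locally_uniform x) as [D [K [hQK hcv]]].
    assert (hx : Boule x posreal_one x).
    { unfold Boule. rewrite Rminus_diag, Rabs_R0. simpl. lra. }
    assert (cvu_v : CVU vn v_lim x posreal_one).
    { apply (CVU_of_geometric_bound _ _ _ _ (2 * D)). intros y n hy. apply hcv, hy. }
    assert (cvu_w : CVU wn w_lim x posreal_one).
    { apply (CVU_of_geometric_bound _ _ _ _ (2 * D)). intros y n hy. apply hcv, hy. }
    assert (cont_v : forall y, Boule x posreal_one y -> continuity_pt v_lim y).
    { apply (CVU_continuity _ _ x _ cvu_v). intros n y _. apply picard_continuous. }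
    assert (cont_w : forall y, Boule x posreal_one y -> continuity_pt w_lim y).
    { apply (CVU_continuity _ _ x _ cvu_w). intros n y _. apply picard_continuous. }
    split.
    + apply (derivable_pt_lim_CVU (fun n => vn (S n)) wn v_lim w_lim x x posreal_one);
        auto; [intros y n _; apply vn_derivable|].
      intros y hy. apply is_lim_seq_Reals, (is_lim_seq_incr_1 (fun n => vn n y)).
        apply is_lim_seq_Reals, hcv, hy.
    + apply (derivable_pt_lim_CVU (fun n => wn (S n)) (fun n y => Q y * vn n y)
               w_lim (fun y => Q y * v_lim y) x x posreal_one); auto.
      * intros y n _. apply wn_derivable.
      * intros y hy. apply is_lim_seq_Reals, (is_lim_seq_incr_1 (fun n => wn n y)).
        apply is_lim_seq_Reals, hcv, hy.
      * apply (CVU_of_geometric_bound _ _ _ _ (K * (2 * D))). intros y n hy.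
        rewrite <- Rmult_minus_distr_l, Rabs_mult, Rmult_assoc.
        apply Rmult_le_compat; try apply Rabs_pos; [apply hQK, hy| apply hcv, hy].
      * intros y hy. apply continuity_pt_mult; auto.
Qed.

End Picard.

(** * Linearisation of the Riccati equation and the boundary problem *)

Lemma riccati_of_linear (Q v w : R -> R) (a : R) :
  0 < v a * w a ->
  (forall r, a <= r -> 0 <= Q r) ->
  (forall r, derivable_pt_lim v r (w r) /\ derivable_pt_lim w r (Q r * v r)) ->
  forall r, a <= r -> derivable_pt_lim (fun x => w x / v x) r (Q r - (w r / v r) ^ 2).
Proof.
  intros hpos hQ hd r hr.
  assert (hprod : v a * w a <= v r * w r).
  { apply (nondecreasing_of_deriv_nonneg (fun x => v x * w x)
             (fun x => w x * w x + v x * (Q x * v x))); auto.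
    - intros c _. apply derivable_pt_lim_mult; apply hd.
    - intros c hc. specialize (hQ c ltac:(lra)). nra. }
  assert (hv : v r <> 0) by (intros h; rewrite h in hprod; lra).
  destruct (hd r) as [dv dw].
  replace (Q r - (w r / v r) ^ 2) with ((Q r * v r * v r - w r * w r) / (v r)²)
    by (unfold Rsqr; field; exact hv).
  exact (derivable_pt_lim_div w v r _ _ dw dv hv).
Qed.

(* A solution of v'' = Q v with Q >= 0 and v'(a) = c v(a), c >= 0, has
   nondecreasing v^2 on [a, R]; hence v(R) = 0 forces v = 0 on [a, R]. *)
Lemma robin_dirichlet_trivial (Q : R -> R) (a Rr c : R) (v v' : R -> R) :
  0 <= c -> a < Rr -> (forall r, a <= r <= Rr -> 0 <= Q r) ->
  (forall r, a <= r <= Rr ->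
     derivable_pt_lim v r (v' r) /\ derivable_pt_lim v' r (- (v r * (- Q r)))) ->
  v' a = c * v a -> v Rr = 0 -> forall r, a <= r <= Rr -> v r = 0.
Proof.
  intros hc hR hQ hd h0 h1.
  assert (hvv' : forall r, a <= r <= Rr -> v a * v' a <= v r * v' r).
  { intros r hr.
    apply (nondecreasing_of_deriv_nonneg (fun x => v x * v' x)
             (fun x => v' x * v' x + v x * (- (v x * - Q x)))); [lra| |].
    - intros x hx. apply derivable_pt_lim_mult; apply hd; lra.
    - intros x hx. specialize (hQ x ltac:(lra)). nra. }
  assert (hsq : forall r, a <= r <= Rr -> v r * v r <= v Rr * v Rr).
  { intros r hr.
    apply (nondecreasing_of_deriv_nonneg (fun x => v x * v x)
             (fun x => v' x * v x + v x * v' x)); [lra| |].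
    - intros x hx. apply derivable_pt_lim_mult; apply hd; lra.
    - intros x hx. specialize (hvv' x ltac:(lra)). rewrite h0 in hvv'. nra. }
  intros r hr. specialize (hsq r hr). rewrite h1 in hsq. nra.
Qed.

Lemma IZR_sqr_ge_1 (k : Z) : k <> 0%Z -> 1 <= IZR k ^ 2.
Proof.
  intros hk. replace (IZR k ^ 2) with (IZR (k * k)) by (rewrite mult_IZR; ring).
  apply IZR_le. nia.
Qed.

(* With t = m/(2r): Q = (k^2 - 1/4 - 2t/(1+t)^2)/r^2 - lam (1+t)^4 and
   2t/(1+t)^2 <= 1/2, so Q >= 0 on (0, oo). *)
Lemma Qpot_nonneg (m : R) (k : Z) (lam r : R) :
  0 < m -> k <> 0%Z -> lam <= 0 -> 0 < r -> 0 <= Qpot m k lam r.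
Proof.
  intros hm hk hlam hr.
  pose proof (IZR_sqr_ge_1 k hk) as hk2.
  set (t := m / (2 * r)).
  assert (ht : 0 < t) by (apply Rdiv_lt_0_compat; lra).
  assert (hQ : Qpot m k lam r =
     (IZR k ^ 2 - / 4 - 2 * t / (1 + t) ^ 2) / r ^ 2 - lam * (1 + t) ^ 4).
  { unfold Qpot. fold t. replace m with (2 * r * t) at 1 by (unfold t; field; lra).
    field. lra. }
  assert (hfrac : 2 * t / (1 + t) ^ 2 <= / 2).
  { apply (Rmult_le_reg_r ((1 + t) ^ 2)); [nra|].
    unfold Rdiv. rewrite Rmult_assoc, Rinv_l by (apply pow_nonzero; lra).
    pose proof (pow2_ge_0 (1 - t)). nra. }
  assert (0 <= (IZR k ^ 2 - / 4 - 2 * t / (1 + t) ^ 2) / r ^ 2)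
    by (apply Rdiv_le_0_compat; [lra|nra]).
  assert (0 <= (1 + t) ^ 4) by (apply pow_le; lra).
  rewrite hQ. nra.
Qed.

Lemma Qpot_continuous (m : R) (k : Z) (lam x : R) :
  0 < m -> 0 < x -> continuity_pt (Qpot m k lam) x.
Proof.
  intros hm hx.
  assert (hmx : 0 < m * / (2 * x)) by (apply Rmult_lt_0_compat; [|apply Rinv_0_lt_compat]; lra).
  assert (hd : ex_derive (Qpot m k lam) x).
  { unfold Qpot. auto_derive.
    repeat split; apply Rgt_not_eq; unfold Rgt; repeat apply Rmult_lt_0_compat; lra. }
  destruct hd as [l hl]. apply is_derive_Reals in hl.
  exact (continuous_of_derivable _ _ _ hl).
Qed.

Definition Qfrozen (m : R) (k : Z) (lam c r : R) : R := Qpot m k lam (Rmax r c).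

Lemma Qfrozen_continuous (m : R) (k : Z) (lam c x : R) :
  0 < m -> 0 < c -> continuity_pt (Qfrozen m k lam c) x.
Proof.
  intros hm hc. unfold Qfrozen.
  apply (continuity_pt_comp (fun r => Rmax r c)).
  - apply (continuity_pt_ext (fun r => (r + c + Rabs (r - c)) / 2)).
    { intros r. unfold Rmax, Rabs.
      destruct (Rle_dec r c); destruct (Rcase_abs (r - c)); lra. }
    apply continuity_pt_div; [|apply continuity_pt_const; intros ? ?; reflexivity|lra].
    apply continuity_pt_plus.
    + apply continuity_pt_plus; [apply continuity_pt_id|].
      apply continuity_pt_const; intros ? ?; reflexivity.
    + apply (continuity_pt_comp (fun r => r - c) Rabs); [|apply Rcontinuity_abs].
      apply continuity_pt_minus; [apply continuity_pt_id|].
      apply continuity_pt_const; intros ? ?; reflexivity.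
  - apply Qpot_continuous; [exact hm|]. pose proof (Rmax_r x c). lra.
Qed.

Theorem mainTheorem4 (m : R) (k : Z) (lam : R)
  (hm : 0 < m) (hk : k <> 0%Z) (hlam : lam <= 0) :
  (exists gam : R -> R,
      gam (m / 2) = / m /\
      forall r, m / 2 <= r ->
        derivable_pt_lim gam r (Qpot m k lam r - gam r ^ 2))
  /\
  (forall (Rr : R) (v v' : R -> R), m / 2 < Rr ->
      (forall r, m / 2 <= r <= Rr ->
         derivable_pt_lim v r (v' r) /\
         derivable_pt_lim v' r (- (v r * (- Qpot m k lam r))))
      -> v' (m / 2) = / m * v (m / 2)
      -> v Rr = 0
      -> forall r, m / 2 <= r <= Rr -> v r = 0).
Proof.
  assert (hinv : 0 < / m) by (apply Rinv_0_lt_compat; lra).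
  split.
  - set (Q := Qfrozen m k lam (m / 2)).
    assert (hQ : forall x, continuity_pt Q x) by (intros x; apply Qfrozen_continuous; lra).
    assert (hQr : forall r, m / 2 <= r -> Q r = Qpot m k lam r)
      by (intros r hr; unfold Q, Qfrozen; rewrite Rmax_left; lra).
    destruct (linear_system_solution Q (m / 2) 1 (/ m) hQ) as [hv0 [hw0 hd]].
    set (v := v_lim Q (m / 2) 1 (/ m)) in *. set (w := w_lim Q (m / 2) 1 (/ m)) in *.
    exists (fun r => w r / v r). split; [rewrite hv0, hw0; field; lra|].
    intros r hr. rewrite <- hQr by exact hr.
    apply (riccati_of_linear Q v w (m / 2)); auto.
    + rewrite hv0, hw0. lra.
    + intros x hx. rewrite hQr by exact hx. apply Qpot_nonneg; auto. lra.
  - intros Rr v v' hR hd h0 h1.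
    apply (robin_dirichlet_trivial (Qpot m k lam) (m / 2) Rr (/ m) v v'); auto; [lra|].
    intros r hr. apply Qpot_nonneg; auto. lra.
Qed.
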